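(* Let $n\ge 4$ and $2\le t\le n-2$, and suppose that the covariance matrix $\Sigma(t)=\mathsf{var}(\vec a(t))$ is invertible and that $\mathsf{var}(W_1(t))\ne \mathsf{cov}(W_1(t),W_2(t))$ and $\mathsf{var}(D_1(t))\ne\mathsf{cov}(D_1(t),D_2(t))$. Define \[ c_1(t)=\frac{\mathsf{var}(W_2(t))-\mathsf{cov}(W_1(t),W_2(t))}{\mathsf{var}(W_1(t))-\mathsf{cov}(W_1(t),W_2(t))},\qquad c_2(t)=\frac{\mathsf{var}(D_2(t))-\mathsf{cov}(D_1(t),D_2(t))}{\mathsf{var}(D_1(t))-\mathsf{cov}(D_1(t),D_2(t))}, \] and \[ W_{\mathrm{Diff}}(t)=W_1(t)-W_2(t),\quad D_{\mathrm{Diff}}(t)=D_1(t)-D_2(t),\quad W_{\mathrm{Sum}}(t)=c_1(t)W_1(t)+W_2(t),\quad D_{\mathrm{Sum}}(t)=c_2(t)D_1(t)+D_2(t). \] Then these four quantities have positive variance, their standardized versions $Z_{W_{\mathrm{Diff}}}(t),Z_{D_{\mathrm{Diff}}}(t),Z_{W_{\mathrm{Sum}}}(t),Z_{D_{\mathrm{Sum}}}(t)$ are pairwise uncorrelated under the permutation null, and \[ S(t)=Z_{W_{\mathrm{Diff}}}(t)^2+Z_{D_{\mathrm{Diff}}}(t)^2+Z_{W_{\mathrm{Sum}}}(t)^2+Z_{D_{\mathrm{Sum}}}(t)^2 . \]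
   Context: Let $G_1,\dots,G_n$ be a sequence of observations (networks) and let $K_1,K_2$ be two real symmetric $n\times n$ kernel matrices computed from this sequence, with $(i,j)$ entry $k_{xij}$ of $K_x$, $x\in\{1,2\}$. The permutation null distribution assigns probability $1/n!$ to each of the $n!$ permutations of the sequence, i.e. the kernel matrices $K_x$ are replaced by $(k_{x\pi(i)\pi(j)})_{i,j}$ for a uniformly random permutation $\pi$ of $\{1,\dots,n\}$ (the same $\pi$ for both kernels); $\mathsf{E},\mathsf{var},\mathsf{cov}$ denote expectation, variance and covariance under this distribution. For a quantity $T$, its standardized version is $Z_T=(T-\mathsf{E}T)/\sqrt{\mathsf{var}(T)}$. For $x\in\{1,2\}$ define \[ \alpha_x(t)=\frac{1}{t(t-1)}\sum_{i=1}^n\sum_{j\ne i}k_{xij}\mathbb{1}\{i,j\le t\},\qquad \beta_x(t)=\frac{1}{(n-t)(n-t-1)}\sum_{i=1}^n\sum_{j\ne i}k_{xij}\mathbb{1}\{i,j> t\}, \] \[ W_x(t)=\frac{t}{n}\alpha_x(t)+\frac{n-t}{n}\beta_x(t),\qquad D_x(t)=\frac{t(t-1)}{n(n-1)}\alpha_x(t)-\frac{(n-t)(n-t-1)}{n(n-1)}\beta_x(t). \] Let $\vec a(t)=[\alpha_1(t),\beta_1(t),\alpha_2(t),\beta_2(t)]^{\mathsf T}$, $\Sigma(t)=\mathsf{var}(\vec a(t))$ (the $4\times4$ covariance matrix under the permutation null), and \[ S(t)=[\vec a(t)-\mathsf{E}\vec a(t)]^{\mathsf T}\Sigma(t)^{-1}[\vec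 a(t)-\mathsf{E}\vec a(t)]. \] *)

From mathcomp Require Import all_boot all_order all_algebra all_fingroup.
Set Implicit Arguments. Unset Strict Implicit. Unset Printing Implicit Defensive.
Import Order.TTheory GRing.Theory Num.Theory.
Local Open Scope ring_scope.

(* Observations are indexed by 'I_n; paper index i+1 corresponds to i : 'I_n,
   so "i <= t" in the paper is (val i < t) here, and "i > t" is (t <= val i). *)

Section Defs.
Variable R : rcfType.
Variable n : nat.

Definition permK (K : 'M[R]_n) (pi : 'S_n) : 'M[R]_n :=
  \matrix_(i, j) K (pi i) (pi j).

Definition alpha (K : 'M[R]_n) (t : nat) : R :=
  ((t * (t - 1))%:R)^-1 *
  \sum_(i < n) \sum_(j < n | (j != i) && (i < t)%N && (j < t)%N) K i j.

Definition beta (K : 'M[R]_n) (t : nat) : R :=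
  (((n - t) * (n - t - 1))%:R)^-1 *
  \sum_(i < n) \sum_(j < n | (j != i) && (t <= i)%N && (t <= j)%N) K i j.

Definition Wstat (K : 'M[R]_n) (t : nat) : R :=
  (t%:R / n%:R) * alpha K t + ((n - t)%:R / n%:R) * beta K t.

Definition Dstat (K : 'M[R]_n) (t : nat) : R :=
  ((t * (t - 1))%:R / (n * (n - 1))%:R) * alpha K t
  - (((n - t) * (n - t - 1))%:R / (n * (n - 1))%:R) * beta K t.

(* random variables under the permutation null: functions of pi : 'S_n,
   each permutation having probability 1/n! *)
Definition Ex (X : 'S_n -> R) : R := (n`!%:R)^-1 * \sum_(pi : 'S_n) X pi.
Definition Cov (X Y : 'S_n -> R) : R :=
  Ex (fun pi => (X pi - Ex X) * (Y pi - Ex Y)).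
Definition Var (X : 'S_n -> R) : R := Cov X X.

Definition Zstd (X : 'S_n -> R) : 'S_n -> R :=
  fun pi => (X pi - Ex X) / Num.sqrt (Var X).

Definition alphaRV K t : 'S_n -> R := fun pi => alpha (permK K pi) t.
Definition betaRV K t : 'S_n -> R := fun pi => beta (permK K pi) t.
Definition WRV K t : 'S_n -> R := fun pi => Wstat (permK K pi) t.
Definition DRV K t : 'S_n -> R := fun pi => Dstat (permK K pi) t.

Definition acomp (K1 K2 : 'M[R]_n) (t : nat) (k : 'I_4) : 'S_n -> R :=
  match val k with
  | 0 => alphaRV K1 t
  | 1 => betaRV K1 t
  | 2 => alphaRV K2 t
  | _ => betaRV K2 t
  end.

Definition Sigma (K1 K2 : 'M[R]_n) (t : nat) : 'M[R]_4 :=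
  \matrix_(k, l) Cov (acomp K1 K2 t k) (acomp K1 K2 t l).

Definition Sstat (K1 K2 : 'M[R]_n) (t : nat) (pi : 'S_n) : R :=
  let d : 'cV[R]_4 := \col_k (acomp K1 K2 t k pi - Ex (acomp K1 K2 t k)) in
  ((d^T *m invmx (Sigma K1 K2 t) *m d) ord0 ord0).

End Defs.

From Pilot Require Import Defs.
From mathcomp Require Import all_boot all_order all_algebra all_fingroup.
From mathcomp Require Import ring zify.
Import Order.TTheory GRing.Theory Num.Theory.
Local Open Scope ring_scope.

Set Implicit Arguments. Unset Strict Implicit. Unset Printing Implicit Defensive.

(* Let r' be the off-diagonal row sums of a kernel K' and H'(p) the sum of
   r'(p k) over k < t. For a symmetric K', D'(t) is an affine function of H', so it
   suffices that cov(W(t), H') = 0 for any kernels K and K'. Expanding alpha and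
   beta over ordered pairs (i, j) and H' over single indices k, the symmetric
   group acts 3-transitively, so every term cov(K(p i, p j), r'(p k)) with
   i, j, k distinct equals one constant c. The pairs of beta lie after t and the
   k of H' before t; for alpha, the constant total of the row sums lets us
   replace H' by minus the tail sum. Hence cov(alpha, H') = -(n - t) c and
   cov(beta, H') = t c, which cancel in W = (t alpha + (n - t) beta) / n.
   So W1 - W2 and c1 W1 + W2 are uncorrelated with D1 - D2 and c2 D1 + D2, and
   c1, c2 are chosen to decorrelate within each pair. Writing the four statistics
   as B a(t) with B Sigma B^T diagonal gives Sigma^-1 = B^T diag(var)^-1 B, so
   S(t) is the sum of their squared standardizations. *)

Lemma perm_extend n (s : 'S_n) k k' : exists s' : 'S_n,
  s' k = k' /\ forall x, s x != s k -> s x != k' -> s' x = s x.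
Proof.
exists (s * tperm (s k) k')%g; split; first by rewrite permM tpermL.
by move=> x sxk sxk'; rewrite permM tpermD // eq_sym.
Qed.

Lemma perm_triple n (i j k i' j' k' : 'I_n) :
  uniq [:: i; j; k] -> uniq [:: i'; j'; k'] ->
  exists s : 'S_n, [/\ s i = i', s j = j' & s k = k'].
Proof.
rewrite /= !inE !negb_or !andbT => /andP[/andP[ij ik] jk] /andP[/andP[ij' ik'] jk'].
have [s1 [s1i _]] := perm_extend 1%g i i'.
have [s2 [s2j s2E]] := perm_extend s1 j j'.
have s2i : s2 i = i' by rewrite s2E s1i // -s1i (inj_eq perm_inj).
have [s3 [s3k s3E]] := perm_extend s2 k k'.
exists s3; split => //.
- by rewrite s3E ?s2i // -s2i (inj_eq perm_inj).
- by rewrite s3E ?s2j // -s2j (inj_eq perm_inj).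
Qed.

Section PermutationNull.
Variables (R : rcfType) (n : nat).
Implicit Types (X Y Z : 'S_n -> R) (s : 'S_n) (a : R).

Lemma eq_Ex X Y : X =1 Y -> Ex X = Ex Y.
Proof. by move=> XY; rewrite /Ex (eq_bigr _ (fun p _ => XY p)). Qed.

Lemma ExD X Y : Ex (fun p => X p + Y p) = Ex X + Ex Y.
Proof. by rewrite /Ex big_split mulrDr. Qed.

Lemma ExZ a X : Ex (fun p => a * X p) = a * Ex X.
Proof. by rewrite /Ex -mulr_sumr mulrCA. Qed.

Lemma Ex_cst a : Ex (fun _ : 'S_n => a) = a.
Proof.
by rewrite /Ex sumr_const card_Sn -[a *+ _]mulr_natl mulKf // pnatr_eq0 -lt0n fact_gt0.
Qed.

Lemma Ex_sum I (r : seq I) (P : pred I) (F : I -> 'S_n -> R) :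
  Ex (fun p => \sum_(i <- r | P i) F i p) = \sum_(i <- r | P i) Ex (F i).
Proof. by rewrite /Ex exchange_big mulr_sumr. Qed.

Lemma Ex_lmul s X : Ex (fun p => X (s * p)%g) = Ex X.
Proof. by rewrite /Ex [in RHS](reindex_inj (mulgI s)). Qed.

Lemma CovE X Y : Cov X Y = Ex (fun p => X p * Y p) - Ex X * Ex Y.
Proof.
rewrite /Cov (eq_Ex (X := fun p => (X p - Ex X) * (Y p - Ex Y))
  (Y := fun p => X p * Y p + (- Ex Y * X p + (- Ex X * Y p + Ex X * Ex Y))));
  last by move=> p; ring.
by rewrite !ExD Ex_cst !ExZ; ring.
Qed.

Lemma CovC X Y : Cov X Y = Cov Y X.
Proof. by apply: eq_Ex => p; rewrite mulrC. Qed.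

Lemma eq_Cov X X' Y Y' : X =1 X' -> Y =1 Y' -> Cov X Y = Cov X' Y'.
Proof.
move=> XX' YY'; rewrite !CovE (eq_Ex XX') (eq_Ex YY').
by congr (_ - _); apply: eq_Ex => p; rewrite XX' YY'.
Qed.

Lemma CovDl X Y Z : Cov (fun p => X p + Y p) Z = Cov X Z + Cov Y Z.
Proof.
rewrite !CovE ExD (eq_Ex (Y := fun p => X p * Z p + Y p * Z p)).
  by rewrite ExD; ring.
by move=> p; rewrite mulrDl.
Qed.

Lemma CovZl a X Y : Cov (fun p => a * X p) Y = a * Cov X Y.
Proof.
rewrite !CovE ExZ (eq_Ex (Y := fun p => a * (X p * Y p))); last by move=> p; ring.
by rewrite ExZ; ring.
Qed.

Lemma Cov_cstl a Y : Cov (fun _ : 'S_n => a) Y = 0.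
Proof. by rewrite CovE ExZ Ex_cst subrr. Qed.

Lemma Cov_suml I (r : seq I) (P : pred I) (F : I -> 'S_n -> R) Y :
  Cov (fun p => \sum_(i <- r | P i) F i p) Y = \sum_(i <- r | P i) Cov (F i) Y.
Proof.
rewrite CovE Ex_sum (eq_Ex (Y := fun p => \sum_(i <- r | P i) F i p * Y p)).
  by rewrite Ex_sum mulr_suml -sumrB; apply: eq_bigr => i _; rewrite CovE.
by move=> p; rewrite mulr_suml.
Qed.

Lemma CovDr X Y Z : Cov X (fun p => Y p + Z p) = Cov X Y + Cov X Z.
Proof. by rewrite CovC CovDl !(CovC X). Qed.

Lemma CovZr a X Y : Cov X (fun p => a * Y p) = a * Cov X Y.
Proof. by rewrite CovC CovZl CovC. Qed.

Lemma CovNl X Y : Cov (fun p => - X p) Y = - Cov X Y.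
Proof. by rewrite -mulN1r -CovZl; apply: eq_Cov => p; rewrite ?mulN1r. Qed.

Lemma CovNr X Y : Cov X (fun p => - Y p) = - Cov X Y.
Proof. by rewrite CovC CovNl CovC. Qed.

Lemma Cov_cstr X a : Cov X (fun=> a) = 0.
Proof. by rewrite CovC Cov_cstl. Qed.

Lemma Cov_sumr I (r : seq I) (P : pred I) (F : I -> 'S_n -> R) X :
  Cov X (fun p => \sum_(i <- r | P i) F i p) = \sum_(i <- r | P i) Cov X (F i).
Proof. by rewrite CovC Cov_suml; apply: eq_bigr => i _; rewrite CovC. Qed.

Lemma Cov_lmul s X Y : Cov (fun p => X (s * p)%g) (fun p => Y (s * p)%g) = Cov X Y.
Proof. by rewrite !CovE !Ex_lmul (Ex_lmul s (fun p => X p * Y p)). Qed.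

Lemma Cov_uniq_triple (f : 'I_n -> 'I_n -> R) (g : 'I_n -> R) i j k i' j' k' :
  uniq [:: i; j; k] -> uniq [:: i'; j'; k'] ->
  Cov (fun p => f (p i) (p j)) (fun p => g (p k)) =
  Cov (fun p => f (p i') (p j')) (fun p => g (p k')).
Proof.
move=> ijk ijk'; have [s [si sj sk]] := perm_triple ijk ijk'.
by rewrite -(Cov_lmul s); apply: eq_Cov => p; rewrite !permM ?si ?sj ?sk.
Qed.

Lemma Var_ge0 X : 0 <= Var X.
Proof.
rewrite /Var /Cov /Ex mulr_ge0 ?invr_ge0 ?ler0n //.
by apply: sumr_ge0 => p _; rewrite -expr2 sqr_ge0.
Qed.

Lemma Var_eq0_Cov X Y : Var Y = 0 -> Cov X Y = 0.
Proof.
move=> VY0; have Ycst p : Y p = Ex Y.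
  move: VY0; rewrite /Var /Cov {1}/Ex => /eqP.
  rewrite mulf_eq0 invr_eq0 pnatr_eq0 eqn0Ngt fact_gt0 /=.
  rewrite psumr_eq0 => [/allP Y0|q _]; last by rewrite -expr2 sqr_ge0.
  by apply/eqP; rewrite -subr_eq0 -sqrf_eq0 expr2; apply: Y0 (mem_index_enum p).
rewrite /Cov (eq_Ex (Y := fun=> 0)) ?Ex_cst // => p.
by rewrite [Y p]Ycst subrr mulr0.
Qed.

Lemma Cov_Zstd X Y :
  Cov (Zstd X) (Zstd Y) = Cov X Y / (Num.sqrt (Var X) * Num.sqrt (Var Y)).
Proof.
rewrite (eq_Cov (X' := fun p => (Num.sqrt (Var X))^-1 * X p + - (Ex X / Num.sqrt (Var X)))
  (Y' := fun p => (Num.sqrt (Var Y))^-1 * Y p + - (Ex Y / Num.sqrt (Var Y)))).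
- by rewrite CovDl CovDr CovDr !Cov_cstl !Cov_cstr CovZl CovZr invfM; ring.
- by move=> p; rewrite /Zstd; ring.
- by move=> p; rewrite /Zstd; ring.
Qed.

Lemma Zstd_sqr X p : Zstd X p ^+ 2 = (X p - Ex X) ^+ 2 / Var X.
Proof. by rewrite /Zstd expr_div_n sqr_sqrtr ?Var_ge0. Qed.

End PermutationNull.

Section Statistics.
Variables (R : rcfType) (n : nat).
Implicit Types (K : 'M[R]_n) (p : 'S_n) (u v w : 'I_n -> R).

Definition lt_ind t (i : 'I_n) : R := if (i < t)%N then 1 else 0.
Definition ge_ind t (i : 'I_n) : R := 1 - lt_ind t i.

Lemma lt_ind_idem t i : lt_ind t i ^+ 2 = lt_ind t i.
Proof. by rewrite /lt_ind; case: ifP; rewrite ?expr1n ?expr0n. Qed.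

Lemma ge_ind_idem t i : ge_ind t i ^+ 2 = ge_ind t i.
Proof. by rewrite /ge_ind /lt_ind; case: ifP; rewrite ?subrr ?subr0 ?expr1n ?expr0n. Qed.

Lemma lt_ge_ind t i : lt_ind t i * ge_ind t i = 0.
Proof. by rewrite /ge_ind /lt_ind; case: ifP; rewrite ?subrr ?subr0 ?mulr0 ?mul0r. Qed.

Lemma sum_lt_ind t : (t <= n)%N -> \sum_(i < n) lt_ind t i = t%:R.
Proof. by move=> tn; rewrite /lt_ind -big_mkcondr (big_ord_narrow tn) sumr_const card_ord. Qed.

Lemma sum_ge_ind t : (t <= n)%N -> \sum_(i < n) ge_ind t i = n%:R - t%:R.
Proof. by move=> tn; rewrite sumrB sum_lt_ind // sumr_const card_ord. Qed.

Lemma sum_offdiagC (F : 'I_n -> 'I_n -> R) :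
  \sum_(i < n) \sum_(j < n | j != i) F i j = \sum_(i < n) \sum_(j < n | j != i) F j i.
Proof.
rewrite (exchange_big_dep predT) //=; apply: eq_bigr => i _.
by apply: eq_bigl => j; rewrite eq_sym.
Qed.

Lemma sum_offdiag_idem w : (forall i, w i ^+ 2 = w i) ->
  \sum_(i < n) \sum_(j < n | j != i) w i * w j =
  (\sum_(i < n) w i) * (\sum_(i < n) w i - 1).
Proof.
move=> w_idem; rewrite mulr_suml; apply: eq_bigr => i _.
rewrite -mulr_sumr [in RHS](bigD1 i) //= mulrBr mulrDr -expr2 w_idem mulr1.
by rewrite addrAC subrr add0r.
Qed.

Lemma sum_perm (g : 'I_n -> R) p : \sum_(i < n) g (p i) = \sum_(i < n) g i.
Proof. exact: esym (reindex_inj (@perm_inj _ p)). Qed.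

Definition rowsum K (i : 'I_n) : R := \sum_(j < n | j != i) K i j.

Definition blocksum w K p : R :=
  \sum_(i < n) \sum_(j < n | j != i) w i * w j * K (p i) (p j).

Definition rowsum_on w K p : R := \sum_(i < n) w i * rowsum K (p i).

Lemma rowsum_perm K p i : rowsum K (p i) = \sum_(j < n | j != i) K (p i) (p j).
Proof.
rewrite /rowsum (reindex_inj (@perm_inj _ p)).
by apply: eq_bigl => j; rewrite (inj_eq perm_inj).
Qed.

Lemma rowsum_on_lt_ind K t p :
  rowsum_on (lt_ind t) K p = \sum_(i < n) rowsum K i - rowsum_on (ge_ind t) K p.
Proof.
rewrite -(sum_perm (rowsum K) p) -sumrB; apply: eq_bigr => i _.
by rewrite /ge_ind; ring.
Qed.

Lemma alpha_permK K t p :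
  alpha (Defs.permK K p) t = ((t * (t - 1))%:R)^-1 * blocksum (lt_ind t) K p.
Proof.
congr (_ * _); apply: eq_bigr => i _; rewrite big_mkcond [RHS]big_mkcond.
apply: eq_bigr => j _; rewrite mxE /lt_ind.
by case: (j != i); case: (i < t)%N; case: (j < t)%N; rewrite ?andbT ?andbF ?mul1r ?mul0r.
Qed.

Lemma beta_permK K t p :
  beta (Defs.permK K p) t = (((n - t) * (n - t - 1))%:R)^-1 * blocksum (ge_ind t) K p.
Proof.
congr (_ * _); apply: eq_bigr => i _; rewrite big_mkcond [RHS]big_mkcond.
apply: eq_bigr => j _; rewrite mxE /ge_ind /lt_ind !(leqNgt t).
by case: (j != i); case: (i < t)%N; case: (j < t)%N;
  rewrite ?andbT ?andbF ?subrr ?subr0 ?mul1r ?mul0r.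
Qed.

Lemma DRV_rowsum_on K t p : K^T = K -> (2 <= t)%N -> (t <= n - 2)%N ->
  DRV K t p = (2 * rowsum_on (lt_ind t) K p - \sum_(i < n) rowsum K i) / (n * (n - 1))%:R.
Proof.
move=> sK t2 tn; have Ksym a b : K a b = K b a by rewrite -[in LHS]sK mxE.
have cancel (A X : R) : A != 0 -> A / (n * (n - 1))%:R * (A^-1 * X) = X / (n * (n - 1))%:R.
  by move=> A0; rewrite mulrAC mulVKf.
rewrite /DRV /Dstat alpha_permK beta_permK !cancel ?pnatr_eq0 ?muln_eq0 -?mulrBl; [|lia|lia].
congr (_ / _).
have headE : rowsum_on (lt_ind t) K p =
    \sum_(i < n) \sum_(j < n | j != i) lt_ind t i * K (p i) (p j).
  by apply: eq_bigr => i _; rewrite rowsum_perm mulr_sumr.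
have headE' : rowsum_on (lt_ind t) K p =
    \sum_(i < n) \sum_(j < n | j != i) lt_ind t j * K (p i) (p j).
  rewrite headE sum_offdiagC; apply: eq_bigr => i _; apply: eq_bigr => j _.
  by rewrite Ksym.
have totalE : \sum_(i < n) rowsum K i = \sum_(i < n) \sum_(j < n | j != i) K (p i) (p j).
  by rewrite -(sum_perm (rowsum K) p); apply: eq_bigr => i _; rewrite rowsum_perm.
rewrite -sumrB mulr_natl mulr2n {1}headE headE' totalE -big_split -sumrB /=.
apply: eq_bigr => i _; rewrite -sumrB -big_split -sumrB /=.
by apply: eq_bigr => j _; rewrite /ge_ind; ring.
Qed.

Lemma Cov_blocksum_rowsum_on u v K K' i0 j0 k0 :
  uniq [:: i0; j0; k0] -> (forall i, u i * v i = 0) ->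
  Cov (blocksum u K) (rowsum_on v K') =
  (\sum_(i < n) \sum_(j < n | j != i) u i * u j) * (\sum_(k < n) v k) *
    Cov (fun p => K (p i0) (p j0)) (fun p => rowsum K' (p k0)).
Proof.
move=> ijk0 uv0; set c0 := Cov (fun p => K (p i0) (p j0)) _.
have pattern i j k : j != i ->
    u i * u j * v k * Cov (fun p => K (p i) (p j)) (fun p => rowsum K' (p k)) =
    u i * u j * v k * c0.
  (* a coincidence k = i or k = j is killed by the disjoint supports of u and v *)
  move=> ji; have [->|ki] := eqVneq k i; first by rewrite [u i * _ * v i]mulrAC uv0 !mul0r.
  have [->|kj] := eqVneq k j; first by rewrite -[u i * u j * v j]mulrA uv0 mulr0 !mul0r.
  have ijk : uniq [:: i; j; k].
    by rewrite /= !inE !negb_or (eq_sym i j) (eq_sym i k) (eq_sym j k) ji ki kj.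
  by rewrite /c0 (Cov_uniq_triple _ _ ijk ijk0).
rewrite Cov_suml !mulr_suml; apply: eq_bigr => i _.
rewrite Cov_suml !mulr_suml; apply: eq_bigr => j ji.
rewrite CovZl Cov_sumr !mulr_sumr mulr_suml; apply: eq_bigr => k _.
by rewrite CovZr mulrA pattern.
Qed.

Section FixedTriple.
Variables (K K' : 'M[R]_n) (t : nat) (i0 j0 k0 : 'I_n).
Hypotheses (ijk0 : uniq [:: i0; j0; k0]) (tn : (t <= n)%N).
Let c0 := Cov (fun p => K (p i0) (p j0)) (fun p => rowsum K' (p k0)).

Lemma Cov_head_blocksum :
  Cov (blocksum (lt_ind t) K) (rowsum_on (lt_ind t) K') =
  - (t%:R * (t%:R - 1) * (n%:R - t%:R) * c0).
Proof.
rewrite (eq_Cov (X' := blocksum (lt_ind t) K) (Y' := fun p =>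
  \sum_(i < n) rowsum K' i + - rowsum_on (ge_ind t) K' p)) => // [|p]; last first.
  exact: rowsum_on_lt_ind.
rewrite CovDr Cov_cstr CovNr (Cov_blocksum_rowsum_on _ _ ijk0 (lt_ge_ind t)).
rewrite (sum_offdiag_idem (lt_ind_idem t)) sum_lt_ind // sum_ge_ind // add0r.
reflexivity.
Qed.

Lemma Cov_tail_blocksum :
  Cov (blocksum (ge_ind t) K) (rowsum_on (lt_ind t) K') =
  (n%:R - t%:R) * (n%:R - t%:R - 1) * t%:R * c0.
Proof.
rewrite (Cov_blocksum_rowsum_on _ _ ijk0) => [|i]; last by rewrite mulrC lt_ge_ind.
by rewrite (sum_offdiag_idem (ge_ind_idem t)) sum_lt_ind // sum_ge_ind.
Qed.

End FixedTriple.

Lemma Cov_W_rowsum_on K K' t : (2 <= t)%N -> (t <= n - 2)%N ->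
  Cov (WRV K t) (rowsum_on (lt_ind t) K') = 0.
Proof.
move=> t2 tn; have n3 : (2 < n)%N by lia.
have ijk0 : uniq [:: Ordinal (ltnW (ltnW n3)); Ordinal (ltnW n3); Ordinal n3] by [].
have t0 : t%:R != 0 :> R by rewrite pnatr_eq0; lia.
have t1 : t%:R - 1 != 0 :> R by rewrite subr_eq0 pnatr_eq1; lia.
have n0 : n%:R != 0 :> R by rewrite pnatr_eq0; lia.
have nt0 : n%:R - t%:R != 0 :> R by rewrite subr_eq0 eqr_nat; lia.
have nt1 : n%:R - t%:R - 1 != 0 :> R by rewrite -natrB ?subr_eq0 ?pnatr_eq1; lia.
rewrite (eq_Cov (X' := fun p =>
    t%:R / n%:R * ((t * (t - 1))%:R)^-1 * blocksum (lt_ind t) K p +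
    (n - t)%:R / n%:R * (((n - t) * (n - t - 1))%:R)^-1 * blocksum (ge_ind t) K p)
  (Y' := rowsum_on (lt_ind t) K')) => // [|p]; last first.
  by rewrite /WRV /Wstat alpha_permK beta_permK !mulrA.
rewrite CovDl !CovZl (Cov_head_blocksum _ _ ijk0) ?(Cov_tail_blocksum _ _ ijk0); [|lia..].
rewrite !natrM !natrB; [|lia..].
by field; rewrite t0 t1 n0 nt0 nt1.
Qed.

Lemma Cov_W_D K K' t : K'^T = K' -> (2 <= t)%N -> (t <= n - 2)%N ->
  Cov (WRV K t) (DRV K' t) = 0.
Proof.
move=> sK' t2 tn; rewrite (eq_Cov (X' := WRV K t) (Y' := fun p =>
  2 / (n * (n - 1))%:R * rowsum_on (lt_ind t) K' p +
  - ((\sum_(i < n) rowsum K' i) / (n * (n - 1))%:R))) // => [|p].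
  by rewrite CovDr Cov_cstr CovZr Cov_W_rowsum_on // mulr0 addr0.
by rewrite /= DRV_rowsum_on //; ring.
Qed.

End Statistics.

Lemma quad_form_diag (F : fieldType) m (S B : 'M[F]_m) (v : 'rV[F]_m) (d : 'cV[F]_m) :
  S \in unitmx -> (forall k, v 0 k != 0) -> B *m S *m B^T = diag_mx v ->
  (d^T *m invmx S *m d) 0 0 = \sum_k (B *m d) k 0 ^+ 2 / v 0 k.
Proof.
move=> S_unit v_neq0 BSB.
pose Dinv := diag_mx (\row_k (v 0 k)^-1).
have BSB_inv : (Dinv *m B *m S) *m B^T = 1%:M.
  rewrite -!mulmxA (mulmxA B) BSB mulmx_diag -diag_const_mx; congr diag_mx.
  by apply/rowP => k; rewrite !mxE mulVf.
have S_inv : invmx S = B^T *m Dinv *m B.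
  rewrite -[invmx S]mul1mx -(mulmx1C BSB_inv) -!mulmxA mulmxV // mulmx1.
  by rewrite !mulmxA.
rewrite S_inv -[d^T *m _ *m _]mulmxA !mulmxA -trmx_mul -mulmxA mul_mx_diag mxE.
by apply: eq_bigr => k _; rewrite !mxE; ring.
Qed.

Section Decorrelation.
Variables (R : rcfType) (n m : nat) (a : 'I_m -> 'S_n -> R).
Hypothesis Sigma_unit : \matrix_(k, l) Cov (a k) (a l) \in unitmx.

Lemma Cov_lincomb (x y : 'rV[R]_m) :
  Cov (fun p => \sum_k x 0 k * a k p) (fun p => \sum_l y 0 l * a l p) =
  \sum_k \sum_l x 0 k * y 0 l * Cov (a k) (a l).
Proof.
rewrite Cov_suml; apply: eq_bigr => k _.
rewrite CovZl Cov_sumr mulr_sumr; apply: eq_bigr => l _.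
by rewrite CovZr mulrA.
Qed.

Lemma Var_lincomb_gt0 (x : 'rV[R]_m) : x != 0 ->
  0 < Var (fun p => \sum_k x 0 k * a k p).
Proof.
move=> x_neq0; rewrite lt_def Var_ge0 andbT; apply: contraNneq x_neq0 => V0.
have Sx : (\matrix_(k, l) Cov (a k) (a l)) *m x^T = 0.
  apply/matrixP => k i; rewrite [RHS]mxE; apply: (etrans _ (Var_eq0_Cov (a k) V0)).
  rewrite !mxE Cov_sumr; apply: eq_bigr => l _.
  by rewrite !mxE (ord1 i) CovZr mulrC.
by apply/eqP; rewrite -[x]trmxK -[x^T]mul1mx -(mulVmx Sigma_unit) -mulmxA Sx mulmx0 trmx0.
Qed.

Variables (B : 'M[R]_m) (Y : 'I_m -> 'S_n -> R).
Hypothesis YE : forall k p, Y k p = \sum_l B k l * a l p.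
Hypothesis B_row_neq0 : forall k, row k B != 0.
Hypothesis Y_uncorr : forall k l : 'I_m, (k < l)%N -> Cov (Y k) (Y l) = 0.

Lemma YE_row k p : Y k p = \sum_l row k B 0 l * a l p.
Proof. by rewrite YE; apply: eq_bigr => l _; rewrite mxE. Qed.

Lemma Var_family_gt0 k : 0 < Var (Y k).
Proof. by rewrite /Var (eq_Cov (YE_row k) (YE_row k)) Var_lincomb_gt0. Qed.

Lemma Cov_family k l : Cov (Y k) (Y l) = (k == l)%:R * Var (Y k).
Proof.
have [->|kl] := eqVneq k l; first by rewrite mul1r.
rewrite mul0r; case: (ltngtP k l) => [/Y_uncorr //|/Y_uncorr|/val_inj kl'].
  by rewrite CovC.
by rewrite kl' eqxx in kl.
Qed.

Lemma Cov_Zstd_family k l : k != l -> Cov (Zstd (Y k)) (Zstd (Y l)) = 0.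
Proof. by move=> /negbTE kl; rewrite Cov_Zstd Cov_family kl !mul0r. Qed.

Lemma Sigma_family :
  B *m (\matrix_(k, l) Cov (a k) (a l)) *m B^T = diag_mx (\row_k Var (Y k)).
Proof.
apply/matrixP => k l; rewrite !mxE -mulr_natl -Cov_family.
rewrite (eq_Cov (YE_row k) (YE_row l)) Cov_lincomb exchange_big; apply: eq_bigr => j _; rewrite !mxE mulr_suml.
by apply: eq_bigr => i _; rewrite !mxE; ring.
Qed.

Lemma centered_family k p : Y k p - Ex (Y k) = \sum_l B k l * (a l p - Ex (a l)).
Proof.
rewrite (eq_Ex (YE k)) Ex_sum YE -sumrB.
by apply: eq_bigr => l _; rewrite ExZ mulrBr.
Qed.

Lemma quad_form_family p :
  let d := \col_k (a k p - Ex (a k)) in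
  (d^T *m invmx (\matrix_(k, l) Cov (a k) (a l)) *m d) 0 0 = \sum_k Zstd (Y k) p ^+ 2.
Proof.
rewrite /= (quad_form_diag _ Sigma_unit _ Sigma_family) => [|k]; last first.
  by rewrite mxE lt0r_neq0 ?Var_family_gt0.
apply: eq_bigr => k _; rewrite Zstd_sqr centered_family !mxE.
by congr (_ ^+ 2 / _); apply: eq_bigr => l _; rewrite !mxE.
Qed.

End Decorrelation.

Definition vec4 (T : Type) (x0 x1 x2 x3 : T) (k : 'I_4) : T :=
  match val k with 0 => x0 | 1 => x1 | 2 => x2 | _ => x3 end.

Section FourStatistics.
Variables (R : rcfType) (n : nat).
Implicit Types (X Y : 'S_n -> R) (K : 'M[R]_n).

Lemma Cov_diff_sum X1 X2 : Var X1 != Cov X1 X2 ->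
  Cov (fun p => X1 p - X2 p)
      (fun p => (Var X2 - Cov X1 X2) / (Var X1 - Cov X1 X2) * X1 p + X2 p) = 0.
Proof.
rewrite /Var -subr_eq0 => hX.
by rewrite CovDl CovNl !CovDr !CovZr (CovC X2 X1); field.
Qed.

Lemma diff_sum_uncorr X1 X2 Y1 Y2 :
  Cov X1 Y1 = 0 -> Cov X1 Y2 = 0 -> Cov X2 Y1 = 0 -> Cov X2 Y2 = 0 ->
  Var X1 != Cov X1 X2 -> Var Y1 != Cov Y1 Y2 ->
  let c1 := (Var X2 - Cov X1 X2) / (Var X1 - Cov X1 X2) in
  let c2 := (Var Y2 - Cov Y1 Y2) / (Var Y1 - Cov Y1 Y2) in
  let Z := vec4 (fun p => X1 p - X2 p) (fun p => Y1 p - Y2 p)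
                (fun p => c1 * X1 p + X2 p) (fun p => c2 * Y1 p + Y2 p) in
  forall k l : 'I_4, (k < l)%N -> Cov (Z k) (Z l) = 0.
Proof.
move=> X1Y1 X1Y2 X2Y1 X2Y2 hX hY c1 c2 Z.
have cross a1 a2 b1 b2 :
    Cov (fun p => a1 * X1 p + a2 * X2 p) (fun p => b1 * Y1 p + b2 * Y2 p) = 0.
  by rewrite CovDl !CovZl !CovDr !CovZr X1Y1 X1Y2 X2Y1 X2Y2; ring.
have diffE (V1 V2 : 'S_n -> R) : (fun p => V1 p - V2 p) =1 (fun p => 1 * V1 p + -1 * V2 p).
  by move=> p /=; ring.
have sumE c (V1 V2 : 'S_n -> R) : (fun p => c * V1 p + V2 p) =1 (fun p => c * V1 p + 1 * V2 p).
  by move=> p /=; rewrite mul1r.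
case=> [[|[|[|[|k]]]] hk] // [[|[|[|[|l]]]] hl] //= _.
- by rewrite /Z /= (eq_Cov (diffE _ _) (diffE _ _)) cross.
- exact: Cov_diff_sum.
- by rewrite /Z /= (eq_Cov (diffE _ _) (sumE _ _ _)) cross.
- by rewrite /Z /= CovC (eq_Cov (sumE _ _ _) (diffE _ _)) cross.
- exact: Cov_diff_sum.
- by rewrite /Z /= (eq_Cov (sumE _ _ _) (sumE _ _ _)) cross.
Qed.

Definition diff_sum_coef t (c1 c2 : R) : 'M[R]_4 :=
  let w := t%:R / n%:R in let w' := (n - t)%:R / n%:R in
  let d := (t * (t - 1))%:R / (n * (n - 1))%:R in
  let d' := ((n - t) * (n - t - 1))%:R / (n * (n - 1))%:R in
  \matrix_(k, l) vec4 (vec4 w w' (- w) (- w')) (vec4 d (- d') (- d) d')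
    (vec4 (c1 * w) (c1 * w') w w') (vec4 (c2 * d) (- (c2 * d')) d (- d')) k l.

Lemma diff_sum_coefE K1 K2 t c1 c2 k p :
  vec4 (fun p => WRV K1 t p - WRV K2 t p) (fun p => DRV K1 t p - DRV K2 t p)
       (fun p => c1 * WRV K1 t p + WRV K2 t p) (fun p => c2 * DRV K1 t p + DRV K2 t p) k p =
  \sum_l diff_sum_coef t c1 c2 k l * acomp K1 K2 t l p.
Proof.
rewrite !big_ord_recl big_ord0 !mxE /WRV /DRV /Wstat /Dstat.
by case: k => [[|[|[|[|k]]]] hk]; rewrite /vec4 /acomp /alphaRV /betaRV /=; ring.
Qed.

Lemma diff_sum_coef_row_neq0 t c1 c2 : (2 <= t)%N -> (t <= n - 2)%N ->
  forall k, row k (diff_sum_coef t c1 c2) != 0.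
Proof.
move=> t2 tn k.
have w0 : t%:R / n%:R != 0 :> R by rewrite mulf_neq0 ?invr_eq0 ?pnatr_eq0; lia.
have d0 : (t * (t - 1))%:R / (n * (n - 1))%:R != 0 :> R.
  by rewrite mulf_neq0 ?invr_eq0 ?pnatr_eq0 ?muln_eq0; lia.
have [l Bkl] : exists l, diff_sum_coef t c1 c2 k l != 0.
  case: k => [[|[|[|[|k]]]] hk] //.
  - by exists ord0; rewrite mxE.
  - by exists ord0; rewrite mxE.
  - by exists (@Ordinal 4 2 isT); rewrite mxE.
  - by exists (@Ordinal 4 2 isT); rewrite mxE.
by apply: contraNneq Bkl => /rowP/(_ l); rewrite mxE [RHS]mxE => ->.
Qed.

End FourStatistics.

Theorem theorem1 (R : rcfType) (n : nat) (K1 K2 : 'M[R]_n) (t : nat) :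
  (4 <= n)%N -> (2 <= t)%N -> (t <= n - 2)%N ->
  K1^T = K1 -> K2^T = K2 ->
  Sigma K1 K2 t \in unitmx ->
  Var (WRV K1 t) != Cov (WRV K1 t) (WRV K2 t) ->
  Var (DRV K1 t) != Cov (DRV K1 t) (DRV K2 t) ->
  let c1 := (Var (WRV K2 t) - Cov (WRV K1 t) (WRV K2 t)) /
            (Var (WRV K1 t) - Cov (WRV K1 t) (WRV K2 t)) in
  let c2 := (Var (DRV K2 t) - Cov (DRV K1 t) (DRV K2 t)) /
            (Var (DRV K1 t) - Cov (DRV K1 t) (DRV K2 t)) in
  let WDiff := fun pi => WRV K1 t pi - WRV K2 t pi in
  let DDiff := fun pi => DRV K1 t pi - DRV K2 t pi in
  let WSum := fun pi => c1 * WRV K1 t pi + WRV K2 t pi in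
  let DSum := fun pi => c2 * DRV K1 t pi + DRV K2 t pi in
  [/\ [/\ 0 < Var WDiff, 0 < Var DDiff, 0 < Var WSum & 0 < Var DSum],
      (Cov (Zstd WDiff) (Zstd DDiff) = 0 /\
       Cov (Zstd WDiff) (Zstd WSum) = 0 /\
       Cov (Zstd WDiff) (Zstd DSum) = 0 /\
       Cov (Zstd DDiff) (Zstd WSum) = 0 /\
       Cov (Zstd DDiff) (Zstd DSum) = 0 /\
       Cov (Zstd WSum) (Zstd DSum) = 0) &
      forall pi : 'S_n,
        Sstat K1 K2 t pi =
        Zstd WDiff pi ^+ 2 + Zstd DDiff pi ^+ 2
        + Zstd WSum pi ^+ 2 + Zstd DSum pi ^+ 2].
Proof.
(* [4 <= n] follows from [2 <= t <= n - 2]. *)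
move=> _ t2 tn sK1 sK2 Sigma_unit hW hD c1 c2 WDiff DDiff WSum DSum.
have YE := diff_sum_coefE K1 K2 t c1 c2.
have Brow := diff_sum_coef_row_neq0 (n := n) c1 c2 t2 tn.
have Y_uncorr := diff_sum_uncorr (Cov_W_D K1 sK1 t2 tn) (Cov_W_D K1 sK2 t2 tn)
  (Cov_W_D K2 sK1 t2 tn) (Cov_W_D K2 sK2 t2 tn) hW hD.
have Vpos := Var_family_gt0 Sigma_unit YE Brow.
have Zuncorr := Cov_Zstd_family Y_uncorr.
split.
- by split; [exact: Vpos (@Ordinal 4 0 isT) | exact: Vpos (@Ordinal 4 1 isT)
    | exact: Vpos (@Ordinal 4 2 isT) | exact: Vpos (@Ordinal 4 3 isT)].
- pose Z k l (hk : (k < 4)%N) (hl : (l < 4)%N) := Zuncorr (Ordinal hk) (Ordinal hl).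
  by do ?split; [apply: (Z 0 1) | apply: (Z 0 2) | apply: (Z 0 3)
    | apply: (Z 1 2) | apply: (Z 1 3) | apply: (Z 2 3)].
- move=> p; rewrite /Sstat (quad_form_family Sigma_unit YE Brow Y_uncorr).
  by rewrite !big_ord_recl big_ord0 addr0 !addrA.
Qed.
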